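(* Let $A$ be a $k$-algebra and let $\psi:P_\bullet\to P'_\bullet$ be an injective chain map of $A$-bimodule resolutions of $A$ lifting the identity map on $A$. If $P'_n/\operatorname{Im}\psi_n$ is projective as an $A$-bimodule for each $n$, then there exists a chain map $\psi':P'_\bullet\to P_\bullet$ (lifting the identity on $A$) with $\psi'\psi=1_P$. If $A$ is a graded algebra with $P_\bullet,P'_\bullet$ graded resolutions and $\psi$ a graded map, then $\psi'$ can be chosen to be graded.
   Context: A bimodule resolution of $A$ is a complex $P_\bullet$ ($n\ge0$) of $A$-bimodules with bimodule differentials and an augmentation $P_0\to A$ such that the augmented complex is exact. A chain map lifting the identity on $A$ is a chain map of bimodule complexes commuting with the augmentations. *)

From HB Require Import structures.
From mathcomp Require Import all_boot all_order all_algebra.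
Set Implicit Arguments. Unset Strict Implicit. Unset Printing Implicit Defensive.
Import GRing.Theory.
Local Open Scope ring_scope.

Section Bimodules.
Variables (k : fieldType) (A : algType k).

(* An A-bimodule over the k-algebra A: an additive group with commuting left
   and right A-actions, unital, associative, biadditive, and on which k acts
   centrally (c%:A m = m c%:A), i.e. a module over A (x)_k A^op. *)
Record bimod := Bimod {
  bm_car :> zmodType;
  bm_l : A -> bm_car -> bm_car;
  bm_r : bm_car -> A -> bm_car;
  bm_lDa : forall a b m, bm_l (a + b) m = bm_l a m + bm_l b m;
  bm_lDm : forall a m n, bm_l a (m + n) = bm_l a m + bm_l a n;
  bm_rDa : forall m a b, bm_r m (a + b) = bm_r m a + bm_r m b;
  bm_rDm : forall m n a, bm_r (m + n) a = bm_r m a + bm_r n a;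
  bm_l1 : forall m, bm_l 1 m = m;
  bm_r1 : forall m, bm_r m 1 = m;
  bm_lM : forall a b m, bm_l (a * b) m = bm_l a (bm_l b m);
  bm_rM : forall m a b, bm_r m (a * b) = bm_r (bm_r m a) b;
  bm_lr : forall a m b, bm_l a (bm_r m b) = bm_r (bm_l a m) b;
  bm_central : forall (c : k) m, bm_l (c%:A) m = bm_r m (c%:A)
}.

Lemma reg_central (c : k) (m : A) : c%:A * m = m * c%:A.
Proof. by rewrite mulr_algl mulr_algr. Qed.

Definition regbimod : bimod :=
  @Bimod A (fun a m => a * m) (fun m a => m * a)
    (fun a b m => mulrDl a b m) (fun a m n => mulrDr a m n)
    (fun m a b => mulrDr m a b) (fun m n a => mulrDl m n a)
    (fun m => mul1r m) (fun m => mulr1 m)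
    (fun a b m => esym (mulrA a b m)) (fun m a b => mulrA m a b)
    (fun a m b => mulrA a m b) reg_central.

Definition is_bhom (M N : bimod) (f : M -> N) : Prop :=
  [/\ forall x y, f (x + y) = f x + f y,
      forall a x, f (bm_l a x) = bm_l a (f x)
    & forall x a, f (bm_r x a) = bm_r (f x) a].

Definition projective_bimod (Q : bimod) : Prop :=
  forall (M N : bimod) (g : M -> N) (f : Q -> N),
    is_bhom g -> (forall y, exists x, g x = y) -> is_bhom f ->
    exists h : Q -> M, is_bhom h /\ forall q, g (h q) = f q.

Record aug_complex := AugComplex {
  cx_obj : nat -> bimod;
  cx_d : forall n, cx_obj n.+1 -> cx_obj n;
  cx_eps : cx_obj 0 -> regbimod
}.

Definition is_bimod_resolution (P : aug_complex) : Prop :=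
  [/\ forall n, is_bhom (@cx_d P n),
      is_bhom (@cx_eps P),
      forall a : A, exists x, @cx_eps P x = a,
      forall x : cx_obj P 0, @cx_eps P x = 0 <-> exists y, @cx_d P 0 y = x
    & forall n (x : cx_obj P n.+1), @cx_d P n x = 0 <-> exists y, @cx_d P n.+1 y = x].

Definition is_chain_map_lifting_id (P P' : aug_complex)
    (f : forall n, cx_obj P n -> cx_obj P' n) : Prop :=
  [/\ forall n, is_bhom (f n),
      forall n x, @cx_d P' n (f n.+1 x) = f n (@cx_d P n x)
    & forall x, @cx_eps P' (f 0 x) = @cx_eps P x].

(* G i is the set of homogeneous elements of degree i; M = (+)_i G i *)
Definition is_grading (M : zmodType) (G : int -> M -> Prop) : Prop :=
  [/\ forall i, G i 0,
      forall i x y, G i x -> G i y -> G i (x - y),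
      forall m, exists (s : seq int) (x : int -> M),
                  (forall i, G i (x i)) /\ m = \sum_(i <- s) x i
    & forall (s : seq int) (x : int -> M), uniq s -> (forall i, G i (x i)) ->
        \sum_(i <- s) x i = 0 -> forall i, i \in s -> x i = 0].

Definition graded_algebra (GA : int -> A -> Prop) : Prop :=
  [/\ is_grading GA,
      forall i (c : k) a, GA i a -> GA i (c *: a),
      forall i j a b, GA i a -> GA j b -> GA (i + j) (a * b)
    & GA 0 1].

Definition graded_bimod (GA : int -> A -> Prop) (M : bimod)
    (G : int -> M -> Prop) : Prop :=
  [/\ is_grading G,
      forall i j a m, GA i a -> G j m -> G (i + j) (bm_l a m)
    & forall i j a m, GA i a -> G j m -> G (i + j) (bm_r m a)].

Definition graded_map (M N : Type) (GM : int -> M -> Prop)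
    (GN : int -> N -> Prop) (f : M -> N) : Prop :=
  forall i m, GM i m -> GN i (f m).

Definition graded_resolution (GA : int -> A -> Prop) (P : aug_complex)
    (GP : forall n, int -> cx_obj P n -> Prop) : Prop :=
  [/\ forall n, graded_bimod GA (GP n),
      forall n, graded_map (GP n.+1) (GP n) (@cx_d P n)
    & graded_map (GP 0) GA (@cx_eps P)].

End Bimodules.
Arguments cx_d {k A} _ _ _.
Arguments cx_eps {k A} _ _.
Arguments is_chain_map_lifting_id {k A} P P' f.

(* Projectivity of Q_n = P'_n / Im psi_n splits psi_n: there is a bimodule
   retraction r_n.  These retractions are corrected inductively so as to commute
   with the differentials.  Once psi'_n is built, the defect
   d r_(n+1) - psi'_n d' vanishes on Im psi_(n+1), hence factors through
   Q_(n+1), and it takes values in Ker d = Im d; projectivity of Q_(n+1) lifts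
   it through d to some h, and psi'_(n+1) = r_(n+1) - h pi_(n+1) is again a
   retraction of psi_(n+1), now compatible with d.  In degree 0 the
   augmentations play the role of d.
   In the graded case, psi' is replaced by its degree-zero part
   sum_i p_i psi' p_i, where p_i projects onto the homogeneous component of
   degree i; as psi, the differentials and the augmentations are graded, this
   is still a chain map retracting psi. *)

From HB Require Import structures.
From mathcomp Require Import all_boot all_order all_algebra.
From mathcomp Require Import boolp.
Set Implicit Arguments. Unset Strict Implicit. Unset Printing Implicit Defensive.
Import GRing.Theory.
Local Open Scope ring_scope.

Lemma morphD0 (M N : zmodType) (f : M -> N) : {morph f : x y / x + y} -> f 0 = 0.
Proof. by move=> fD; apply: (addrI (f 0)); rewrite -fD !addr0. Qed.

Lemma morphDB (M N : zmodType) (f : M -> N) :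
  {morph f : x y / x + y} -> {morph f : x y / x - y}.
Proof. by move=> fD x y; apply: (addIr (f y)); rewrite -fD !subrK. Qed.

Section BimoduleMaps.
Variables (k : fieldType) (A : algType k).
Implicit Types M N X : bimod A.

Lemma bhomD M N (f : M -> N) : is_bhom f -> {morph f : x y / x + y}.
Proof. by case. Qed.

Lemma bhom0 M N (f : M -> N) : is_bhom f -> f 0 = 0.
Proof. by move/bhomD/morphD0. Qed.

Lemma bhomB M N (f : M -> N) : is_bhom f -> {morph f : x y / x - y}.
Proof. by move/bhomD/morphDB. Qed.

Lemma bhom_id M : is_bhom (@id M).
Proof. by []. Qed.

Lemma bhom_comp M N X (f : M -> N) (g : N -> X) :
  is_bhom f -> is_bhom g -> is_bhom (g \o f).
Proof.
by move=> [fD fl fr] [gD gl gr]; split=> * /=; rewrite ?fD ?gD ?fl ?gl ?fr ?gr.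
Qed.

Lemma bhom_sub M N (f g : M -> N) :
  is_bhom f -> is_bhom g -> is_bhom (fun x => f x - g x).
Proof.
move=> [fD fl fr] [gD gl gr]; split=> [x y|a x|x a].
- by rewrite fD gD opprD addrACA.
- by rewrite fl gl (morphDB (bm_lDm a)).
- by rewrite fr gr (morphDB (fun x y => bm_rDm x y a)).
Qed.

End BimoduleMaps.

Section SubBimodule.
Variables (k : fieldType) (A : algType k) (M : bimod A) (S : M -> Prop).
Hypotheses (S0 : S 0) (SB : forall x y, S x -> S y -> S (x - y))
  (Sl : forall a x, S x -> S (bm_l a x)) (Sr : forall x a, S x -> S (bm_r x a)).

Definition subbimod_pred : {pred M} := fun x => `[< S x >].

Fact subbimod_zmod_closed : zmod_closed subbimod_pred.
Proof. by split=> [|x y /asboolP Sx /asboolP Sy]; apply/asboolP; [|apply: SB]. Qed.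
HB.instance Definition _ := GRing.isZmodClosed.Build M subbimod_pred
  subbimod_zmod_closed.

Definition subbimod_car := {x : M | x \in subbimod_pred}.
HB.instance Definition _ := [isSub of subbimod_car for sval].
HB.instance Definition _ := [Choice of subbimod_car by <:].
HB.instance Definition _ := [SubChoice_isSubZmodule of subbimod_car by <:].

Lemma subbimod_valP (u : subbimod_car) : S (val u).
Proof. exact/asboolP/(valP u). Qed.

Definition subbimod_Sub x (Sx : S x) : subbimod_car :=
  Sub x (introT (asboolP _) Sx).

Definition subbimod : bimod A.
Proof.
refine (@Bimod _ _ subbimod_car
  (fun a u => subbimod_Sub (Sl a (subbimod_valP u)))
  (fun u a => subbimod_Sub (Sr a (subbimod_valP u))) _ _ _ _ _ _ _ _ _ _).
all: by move=> *; apply: val_inj; rewrite /= ?(bm_lDa, bm_lDm, bm_rDa, bm_rDm,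
  bm_l1, bm_r1, bm_lM, bm_rM, bm_lr, bm_central).
Defined.

End SubBimodule.

Section Projectivity.
Variables (k : fieldType) (A : algType k).
Implicit Types M N Q X Y : bimod A.

Definition bimod_coker N M Q (psi : N -> M) (pi : M -> Q) : Prop :=
  [/\ is_bhom pi, forall q, exists x, pi x = q
    & forall x, pi x = 0 <-> exists y, psi y = x].

Lemma projective_lift_image Q X Y (e : Y -> X) (g : Q -> X) :
  projective_bimod Q -> is_bhom e -> is_bhom g ->
  (forall q, exists y, e y = g q) ->
  exists h : Q -> Y, is_bhom h /\ forall q, e (h q) = g q.
Proof.
move=> pQ he hg im_g.
pose S x := exists y, e y = x.
have S0 : S 0 by exists 0; apply: bhom0.
have SB x y : S x -> S y -> S (x - y).
  by move=> [u <-] [v <-]; exists (u - v); apply: bhomB.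
have Sl a x : S x -> S (bm_l a x) by move=> [u <-]; exists (bm_l a u); case: he.
have Sr x a : S x -> S (bm_r x a) by move=> [u <-]; exists (bm_r u a); case: he.
pose e' y : subbimod S0 SB Sl Sr := subbimod_Sub (ex_intro _ y erefl).
pose g' q : subbimod S0 SB Sl Sr := subbimod_Sub (im_g q).
have he' : is_bhom e'.
  by case: he => eD el er; split=> *; apply: val_inj; rewrite /= ?eD ?el ?er.
have hg' : is_bhom g'.
  by case: hg => gD gl gr; split=> *; apply: val_inj; rewrite /= ?gD ?gl ?gr.
have e'_surj z : exists y, e' y = z.
  by have [y ey] := subbimod_valP z; exists y; apply: val_inj.
have [h [hh e'h]] := pQ _ _ e' g' he' e'_surj hg'.
by exists h; split=> // q; apply: (congr1 val (e'h q)).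
Qed.

Lemma projective_coker_retraction N M Q (psi : N -> M) (pi : M -> Q) :
  is_bhom psi -> injective psi -> bimod_coker psi pi -> projective_bimod Q ->
  exists r : M -> N, is_bhom r /\ cancel psi r.
Proof.
move=> hpsi psi_inj [hpi pi_surj ker_pi] pQ.
have [s [hs piK]] := pQ _ _ pi id hpi pi_surj (bhom_id Q).
have /choice[r psi_r] : forall x, exists y, psi y = x - s (pi x).
  by move=> x; apply/ker_pi; rewrite bhomB // piK subrr.
have pi_psi x : pi (psi x) = 0 by apply/ker_pi; exists x.
exists r; split=> [|x]; last by apply: psi_inj; rewrite psi_r pi_psi bhom0 ?subr0.
have [psiD psil psir] := hpsi.
have [sD sl sr] := bhom_sub (bhom_id M) (bhom_comp hpi hs).
by split=> *; apply: psi_inj; rewrite ?psiD ?psil ?psir !psi_r ?sD ?sl ?sr.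
Qed.

Lemma coker_factor N M Q X (psi : N -> M) (pi : M -> Q) (f : M -> X) :
  bimod_coker psi pi -> is_bhom f -> (forall y, f (psi y) = 0) ->
  exists g : Q -> X, is_bhom g /\ forall x, g (pi x) = f x.
Proof.
move=> [hpi pi_surj ker_pi] hf f_psi.
have /choice[c cK] := pi_surj.
have f_pi x x' : pi x = pi x' -> f x = f x'.
  move=> eq_pi; have /ker_pi[y psi_y] : pi (x - x') = 0 by rewrite bhomB // eq_pi subrr.
  by apply/eqP; rewrite -subr_eq0 -bhomB // -psi_y f_psi.
exists (f \o c); split=> [|x]; last by apply: f_pi; rewrite cK.
have [piD pil pir] := hpi; have [fD fl fr] := hf.
by split=> * /=; [rewrite -fD | rewrite -fl | rewrite -fr]; apply: f_pi;
  rewrite ?piD ?pil ?pir !cK.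
Qed.

Lemma lift_retraction N M Q X X' (psi : N -> M) (pi : M -> Q)
    (dN : N -> X) (dM : M -> X') (f : X' -> X) :
  is_bhom psi -> injective psi -> bimod_coker psi pi -> projective_bimod Q ->
  is_bhom dN -> is_bhom dM -> is_bhom f ->
  (forall y, f (dM (psi y)) = dN y) -> (forall x, exists y, dN y = f (dM x)) ->
  exists f' : M -> N, [/\ is_bhom f', cancel psi f' & forall x, dN (f' x) = f (dM x)].
Proof.
move=> hpsi psi_inj coker_pi pQ hdN hdM hf f_psi im_f.
have [r [hr psiK]] := projective_coker_retraction hpsi psi_inj coker_pi pQ.
have [hpi _ ker_pi] := coker_pi.
have [g [hg g_pi]] : exists g : Q -> X, is_bhom g /\
    forall x, g (pi x) = dN (r x) - f (dM x).
  apply: coker_factor coker_pi (bhom_sub (bhom_comp hr hdN) (bhom_comp hdM hf)) _.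
  by move=> y /=; rewrite psiK f_psi subrr.
have im_g q : exists y, dN y = g q.
  have [_ pi_surj _] := coker_pi; have [x <-] := pi_surj q; have [y dNy] := im_f x.
  by exists (r x - y); rewrite g_pi bhomB // dNy.
have [h [hh dNh]] := projective_lift_image pQ hdN hg im_g.
exists (fun x => r x - h (pi x)); split.
- exact: bhom_sub hr (bhom_comp hpi hh).
- move=> y /=; have -> : pi (psi y) = 0 by apply/ker_pi; exists y.
  by rewrite bhom0 // subr0 psiK.
- by move=> x; rewrite bhomB // dNh g_pi opprB addrC subrK.
Qed.

End Projectivity.

Lemma dependent_choice_nat (T : nat -> Type) (P : forall n, T n -> Prop)
    (R : forall n, T n -> T n.+1 -> Prop) (t0 : T 0) :
  P 0 t0 -> (forall n t, P n t -> exists2 t', P n.+1 t' & R n t t') ->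
  exists f : forall n, T n,
    [/\ f 0 = t0, forall n, P n (f n) & forall n, R n (f n) (f n.+1)].
Proof.
move=> Pt0 step.
have next n (t : {t | P n t}) : {t' : {t' | P n.+1 t'} | R n (sval t) (sval t')}.
  by apply: cid; have [t' Pt' Rt'] := step n _ (svalP t); exists (exist _ t' Pt').
pose fix f n : {t | P n t} :=
  if n is m.+1 then sval (next m (f m)) else exist _ t0 Pt0.
exists (fun n => sval (f n)); split=> // n; first exact: svalP.
exact: svalP (next n (f n)).
Qed.

Lemma chain_retraction_exists (k : fieldType) (A : algType k) (P P' : aug_complex A)
    (psi : forall n, cx_obj P n -> cx_obj P' n) :
  is_bimod_resolution P -> is_bimod_resolution P' ->
  is_chain_map_lifting_id P P' psi -> (forall n, injective (psi n)) ->
  (forall n, exists (Q : bimod A) (pi : cx_obj P' n -> Q),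
     bimod_coker (psi n) pi /\ projective_bimod Q) ->
  exists psi' : forall n, cx_obj P' n -> cx_obj P n,
    is_chain_map_lifting_id P' P psi' /\ forall n, cancel (psi n) (psi' n).
Proof.
move=> [hd he eps_surj ex0 exS] [hd' he' _ ex0' exS'] [hpsi dpsi epspsi] psi_inj coker.
pose extendable n (f : cx_obj P' n -> cx_obj P n) :=
  [/\ is_bhom f, cancel (psi n) f
    & forall x, exists y, cx_d P n y = f (cx_d P' n x)].
have [f0 [hf0 f0K eps_f0]] : exists f0, [/\ is_bhom f0, cancel (psi 0) f0
    & forall x, cx_eps P (f0 x) = cx_eps P' x].
  have [Q [pi [coker_pi pQ]]] := coker 0.
  exact: lift_retraction (hpsi 0) (psi_inj 0) coker_pi pQ he he' (bhom_id _)
    epspsi (fun x => eps_surj _).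
have extendable0 : extendable 0 f0.
  by split=> // x; apply/ex0; rewrite eps_f0; apply/ex0'; exists x.
have extendableS n f : extendable n f -> exists2 f', extendable n.+1 f'
    & forall x, cx_d P n (f' x) = f (cx_d P' n x).
  move=> [hf fK im_f]; have [Q [pi [coker_pi pQ]]] := coker n.+1.
  have f_psi y : f (cx_d P' n (psi n.+1 y)) = cx_d P n y by rewrite dpsi fK.
  have [f' [hf' f'K d_f']] := lift_retraction (hpsi n.+1) (psi_inj n.+1) coker_pi
    pQ (hd n) (hd' n) hf f_psi im_f.
  exists f' => //; split=> // x; apply/exS; rewrite d_f'.
  have /exS'-> : exists y, cx_d P' n.+1 y = cx_d P' n.+1 x by exists x.
  exact: bhom0.
have [psi' [psi'_base ext d_psi']] := dependent_choice_nat extendable0 extendableS.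
exists psi'; split; last by move=> n; case: (ext n).
by split=> [n|//|x]; [case: (ext n) | rewrite psi'_base].
Qed.

Lemma sum_extend_zero (I : eqType) (M : nmodType) (t t' : seq I) (F : I -> M) :
  uniq t -> uniq t' -> {subset t <= t'} -> (forall i, i \notin t -> F i = 0) ->
  \sum_(i <- t') F i = \sum_(i <- t) F i.
Proof.
move=> ut ut' tt' Ft.
rewrite (eq_bigr (fun i => if i \in t then F i else 0)); last first.
  by move=> i _; case: ifP => // /negbT /Ft.
rewrite -big_mkcond -big_filter; apply/perm_big/uniq_perm; rewrite ?filter_uniq //.
by move=> i; rewrite mem_filter andb_idr // => /tt'.
Qed.

Section HomogeneousComponents.
Variables (M : zmodType) (G : int -> M -> Prop).

Definition homog_decomp (m : M) (p : seq int * (int -> M)) : Prop :=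
  [/\ uniq p.1, forall i, G i (p.2 i) & m = \sum_(i <- p.1) p.2 i].

(* The fallback value is never used when G is a grading. *)
Definition hdecomp (m : M) : seq int * (int -> M) :=
  if pselect (exists p, homog_decomp m p) is left ex then sval (cid ex)
  else ([::], fun=> 0).

Definition hsupp (m : M) : seq int := (hdecomp m).1.

Definition hcomp (i : int) (m : M) : M :=
  if i \in hsupp m then (hdecomp m).2 i else 0.

Hypothesis hG : is_grading G.

Lemma grading0 i : G i 0.
Proof. by case: hG. Qed.

Lemma gradingB i x y : G i x -> G i y -> G i (x - y).
Proof. by case: hG => _ GB _ _; apply: GB. Qed.

Lemma gradingD i x y : G i x -> G i y -> G i (x + y).
Proof.
move=> Gx Gy; rewrite -[y]opprK; apply: gradingB => //.
by rewrite -sub0r; apply: gradingB => //; apply: grading0.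
Qed.

Lemma gradingMn i x n : G i x -> G i (x *+ n).
Proof.
move=> Gx; elim: n => [|n IHn]; first by rewrite mulr0n; apply: grading0.
by rewrite mulrS; apply: gradingD.
Qed.

Lemma homog_decomp_exists m : exists p, homog_decomp m p.
Proof.
have [_ _ decomp _] := hG; have [s [x [Gx ->]]] := decomp m.
exists (undup s, fun i => x i *+ count_mem i s); split=> /=.
- exact: undup_uniq.
- by move=> i; apply: gradingMn.
- by rewrite -big_undup_iterop_count.
Qed.

Lemma hdecompP m : homog_decomp m (hdecomp m).
Proof.
rewrite /hdecomp; case: pselect => [ex|]; first exact: svalP (cid ex).
by move/(_ (homog_decomp_exists m)).
Qed.

Lemma hsupp_uniq m : uniq (hsupp m).
Proof. by case: (hdecompP m). Qed.

Lemma hcompG i m : G i (hcomp i m).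
Proof. by rewrite /hcomp; case: ifP => _; [case: (hdecompP m) | apply: grading0]. Qed.

Lemma hcomp_out i m : i \notin hsupp m -> hcomp i m = 0.
Proof. by rewrite /hcomp => /negbTE->. Qed.

Lemma hcomp_sum m : m = \sum_(i <- hsupp m) hcomp i m.
Proof.
case: (hdecompP m) => _ _ {1}->.
by apply: eq_big_seq => i supp_i; rewrite /hcomp supp_i.
Qed.

Lemma hcomp_unique (t : seq int) (y : int -> M) m :
  uniq t -> (forall i, G i (y i)) -> (forall i, i \notin t -> y i = 0) ->
  m = \sum_(i <- t) y i -> forall i, hcomp i m = y i.
Proof.
move=> ut Gy yt m_y i; pose s := undup (t ++ hsupp m).
have us : uniq s by apply: undup_uniq.
have ts j : j \in t -> j \in s by rewrite mem_undup mem_cat => ->.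
have supp_s j : j \in hsupp m -> j \in s by rewrite mem_undup mem_cat orbC => ->.
have hcomp_y : forall j, j \in s -> hcomp j m - y j = 0.
  have [_ _ _ decomp_uniq] := hG.
  apply: (decomp_uniq s (fun j => hcomp j m - y j)) => // [l|].
    by apply: gradingB; [apply: hcompG | apply: Gy].
  have hcomp_m l : l \notin hsupp m -> hcomp l m = 0 by apply: hcomp_out.
  rewrite sumrB (sum_extend_zero ut us ts yt).
  by rewrite (sum_extend_zero (hsupp_uniq m) us supp_s hcomp_m) -hcomp_sum -m_y subrr.
have [/hcomp_y/eqP|] := boolP (i \in s); first by rewrite subr_eq0 => /eqP.
rewrite mem_undup mem_cat negb_or => /andP[not_t not_supp].
by rewrite hcomp_out // yt.
Qed.

Lemma hcompD i : {morph hcomp i : x y / x + y}.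
Proof.
move=> m n; pose s := undup (hsupp m ++ hsupp n).
have us : uniq s by apply: undup_uniq.
have m_s l : l \in hsupp m -> l \in s by rewrite mem_undup mem_cat => ->.
have n_s l : l \in hsupp n -> l \in s by rewrite mem_undup mem_cat orbC => ->.
have hcomp_m l : l \notin hsupp m -> hcomp l m = 0 by apply: hcomp_out.
have hcomp_n l : l \notin hsupp n -> hcomp l n = 0 by apply: hcomp_out.
apply: (hcomp_unique (t := s) (y := fun l => hcomp l m + hcomp l n)) => // [l|l|].
- by apply: gradingD; apply: hcompG.
- by rewrite mem_undup mem_cat negb_or => /andP[/hcomp_m-> /hcomp_n->]; rewrite addr0.
rewrite big_split /= (sum_extend_zero (hsupp_uniq m) us m_s hcomp_m).
by rewrite (sum_extend_zero (hsupp_uniq n) us n_s hcomp_n) -!hcomp_sum.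
Qed.

Lemma hcomp0 i : hcomp i 0 = 0.
Proof. exact: morphD0 (hcompD i). Qed.

Lemma hcompB i : {morph hcomp i : x y / x - y}.
Proof. exact: morphDB (hcompD i). Qed.

Lemma hcomp_homog i j x : G j x -> hcomp i x = if i == j then x else 0.
Proof.
move=> Gx; apply: (hcomp_unique (t := [:: j]) (y := fun l => if l == j then x else 0))
  => // [l|l|].
- by case: eqP => [->|_] //; apply: grading0.
- by rewrite inE => /negbTE->.
- by rewrite big_seq1 eqxx.
Qed.

Lemma hcomp_idem i j m : hcomp i (hcomp j m) = if i == j then hcomp j m else 0.
Proof. exact/hcomp_homog/hcompG. Qed.

Lemma hcomp_inj m n : (forall i, hcomp i m = hcomp i n) -> m = n.
Proof.
move=> eq_mn; apply/eqP; rewrite -subr_eq0; apply/eqP.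
by rewrite [LHS]hcomp_sum big1_seq // => i _; rewrite hcompB eq_mn subrr.
Qed.

Lemma homog_hcomp i m : (forall j, j != i -> hcomp j m = 0) -> G i m.
Proof.
move=> hcomp_m; suff -> : m = hcomp i m by apply: hcompG.
by apply: hcomp_inj => j; rewrite hcomp_idem; case: eqVneq => [->|/hcomp_m].
Qed.

Lemma homog_additive_eq (X : zmodType) (u v : M -> X) :
  {morph u : x y / x + y} -> {morph v : x y / x + y} ->
  (forall i x, G i x -> u x = v x) -> u =1 v.
Proof.
move=> uD vD eq_uv m; rewrite (hcomp_sum m) (big_morph u uD (morphD0 uD)).
by rewrite (big_morph v vD (morphD0 vD)); apply: eq_bigr => i _; apply/eq_uv/hcompG.
Qed.

End HomogeneousComponents.

Lemma hcomp_shift (M N : zmodType) (G : int -> M -> Prop) (G' : int -> N -> Prop)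
    (f : M -> N) (j : int) :
  is_grading G -> is_grading G' -> {morph f : x y / x + y} ->
  (forall l x, G l x -> G' (j + l) (f x)) ->
  forall i m, hcomp G' i (f m) = f (hcomp G (i - j) m).
Proof.
move=> hG hG' fD f_shift i m.
apply: (hcomp_unique hG' (t := [seq j + l | l <- hsupp G m])
  (y := fun l => f (hcomp G (l - j) m))) => [|l|l|].
- by rewrite map_inj_uniq ?hsupp_uniq //; apply: addrI.
- by have := f_shift _ _ (hcompG hG (l - j) m); rewrite subrKC.
- move=> l_supp; rewrite hcomp_out ?(morphD0 fD) //; apply: contra l_supp => l_supp.
  by rewrite -(subrKC j l); apply: map_f.
- rewrite big_map (eq_bigr (fun l => f (hcomp G l m))) => [|l _]; last first.
    by rewrite (addrC j) addrK.
  by rewrite -(big_morph f fD (morphD0 fD)) -hcomp_sum.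
Qed.

Lemma hcomp_graded_map (M N : zmodType) (G : int -> M -> Prop) (G' : int -> N -> Prop)
    (f : M -> N) :
  is_grading G -> is_grading G' -> {morph f : x y / x + y} -> graded_map G G' f ->
  forall i m, hcomp G' i (f m) = f (hcomp G i m).
Proof.
move=> hG hG' fD gf i m; rewrite (hcomp_shift (j := 0) hG hG' fD) ?subr0 // => l x Gx.
by rewrite add0r; apply: gf.
Qed.

Definition deg0 (M N : zmodType) (GM : int -> M -> Prop) (GN : int -> N -> Prop)
    (f : M -> N) (m : M) : N :=
  \sum_(i <- hsupp GM m) hcomp GN i (f (hcomp GM i m)).

Lemma hcomp_deg0 (M N : zmodType) (GM : int -> M -> Prop) (GN : int -> N -> Prop)
    (f : M -> N) :
  is_grading GM -> is_grading GN -> f 0 = 0 ->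
  forall i m, hcomp GN i (deg0 GM GN f m) = hcomp GN i (f (hcomp GM i m)).
Proof.
move=> hGM hGN f0 i m; apply: (hcomp_unique hGN (t := hsupp GM m)
  (y := fun j => hcomp GN j (f (hcomp GM j m)))) => // [|j|j supp_j].
- exact: hsupp_uniq.
- exact: hcompG.
- by rewrite [hcomp GM j m]hcomp_out // f0 hcomp0.
Qed.

Section DegreeZeroPart.
Variables (L M N X : zmodType) (GL : int -> L -> Prop) (GM : int -> M -> Prop)
  (GN : int -> N -> Prop) (GX : int -> X -> Prop).
Hypotheses (hGL : is_grading GL) (hGM : is_grading GM) (hGN : is_grading GN)
  (hGX : is_grading GX).

Lemma deg0_graded (f : M -> N) : f 0 = 0 -> graded_map GM GN (deg0 GM GN f).
Proof.
move=> f0 i m Gm; apply: homog_hcomp => // j /negbTE ji.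
by rewrite (hcomp_deg0 hGM hGN) // (hcomp_homog hGM _ Gm) ji f0 hcomp0.
Qed.

Lemma eq_deg0 (f g : M -> N) : f =1 g -> deg0 GM GN f =1 deg0 GM GN g.
Proof. by move=> fg m; apply: eq_bigr => i _; rewrite fg. Qed.

Lemma deg0_graded_map (f : M -> N) :
  {morph f : x y / x + y} -> graded_map GM GN f -> deg0 GM GN f =1 f.
Proof.
move=> fD gf m; apply: (hcomp_inj hGN) => i.
rewrite (hcomp_deg0 hGM hGN) ?(morphD0 fD) // !(hcomp_graded_map hGM hGN fD gf).
by rewrite hcomp_idem ?eqxx.
Qed.

Lemma deg0_compl (f : M -> N) (g : N -> X) :
  f 0 = 0 -> {morph g : x y / x + y} -> graded_map GN GX g ->
  forall m, g (deg0 GM GN f m) = deg0 GM GX (g \o f) m.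
Proof.
move=> f0 gD gg m; apply: (hcomp_inj hGX) => i.
rewrite (hcomp_deg0 hGM hGX) /= ?f0 ?(morphD0 gD) //.
by rewrite !(hcomp_graded_map hGN hGX gD gg) (hcomp_deg0 hGM hGN).
Qed.

Lemma deg0_compr (h : L -> M) (f : M -> N) :
  f 0 = 0 -> {morph h : x y / x + y} -> graded_map GL GM h ->
  forall l, deg0 GM GN f (h l) = deg0 GL GN (f \o h) l.
Proof.
move=> f0 hD gh l; apply: (hcomp_inj hGN) => i.
rewrite (hcomp_deg0 hGM hGN) // (hcomp_deg0 hGL hGN) /= ?(morphD0 hD) //.
by rewrite (hcomp_graded_map hGL hGM hD gh).
Qed.

End DegreeZeroPart.

Section GradedBimodules.
Variables (k : fieldType) (A : algType k) (GA : int -> A -> Prop).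

Lemma hcomp_bm_l (M : bimod A) (G : int -> M -> Prop) j a m i :
  graded_bimod GA G -> GA j a -> hcomp G i (bm_l a m) = bm_l a (hcomp G (i - j) m).
Proof.
move=> [hG Gl _] GAa; apply: (hcomp_shift hG hG (bm_lDm a)) => l x; exact: Gl.
Qed.

Lemma hcomp_bm_r (M : bimod A) (G : int -> M -> Prop) j a m i :
  graded_bimod GA G -> GA j a -> hcomp G i (bm_r m a) = bm_r (hcomp G (i - j) m) a.
Proof.
move=> [hG _ Gr] GAa; apply: (hcomp_shift hG hG (fun x y => bm_rDm x y a)) => l x.
exact: Gr.
Qed.

Hypothesis hGA : is_grading GA.
Variables (M N : bimod A) (GM : int -> M -> Prop) (GN : int -> N -> Prop).
Hypotheses (gM : graded_bimod GA GM) (gN : graded_bimod GA GN).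

Lemma deg0_bhom (f : M -> N) : is_bhom f -> is_bhom (deg0 GM GN f).
Proof.
move=> hf; have [hGM _ _] := gM; have [hGN _ _] := gN; have f0 := bhom0 hf.
have [fD fl fr] := hf.
have deg0D : {morph deg0 GM GN f : x y / x + y}.
  move=> x y; apply: (hcomp_inj hGN) => i.
  by rewrite hcompD // !(hcomp_deg0 hGM hGN) // hcompD // fD hcompD.
split=> // [a m|m a].
- apply: (homog_additive_eq hGA (u := fun a => deg0 GM GN f (bm_l a m))
    (v := fun a => bm_l a (deg0 GM GN f m))) => [x y|x y|j b GAb] /=.
  + by rewrite bm_lDa deg0D.
  + by rewrite bm_lDa.
  apply: (hcomp_inj hGN) => i; rewrite (hcomp_deg0 hGM hGN) // (hcomp_bm_l _ _ gM GAb).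
  by rewrite fl !(hcomp_bm_l _ _ gN GAb) (hcomp_deg0 hGM hGN).
- apply: (homog_additive_eq hGA (u := fun a => deg0 GM GN f (bm_r m a))
    (v := fun a => bm_r (deg0 GM GN f m) a)) => [x y|x y|j b GAb] /=.
  + by rewrite bm_rDa deg0D.
  + by rewrite bm_rDa.
  apply: (hcomp_inj hGN) => i; rewrite (hcomp_deg0 hGM hGN) // (hcomp_bm_r _ _ gM GAb).
  by rewrite fr !(hcomp_bm_r _ _ gN GAb) (hcomp_deg0 hGM hGN).
Qed.

End GradedBimodules.

Definition is_bimod_complex (k : fieldType) (A : algType k) (P : aug_complex A) :=
  (forall n, is_bhom (cx_d P n)) /\ is_bhom (cx_eps P).

Lemma bimod_resolution_complex (k : fieldType) (A : algType k) (P : aug_complex A) :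
  is_bimod_resolution P -> is_bimod_complex P.
Proof. by case. Qed.

Lemma deg0_chain_retraction (k : fieldType) (A : algType k) (GA : int -> A -> Prop)
    (P P' : aug_complex A) (GP : forall n, int -> cx_obj P n -> Prop)
    (GP' : forall n, int -> cx_obj P' n -> Prop)
    (psi : forall n, cx_obj P n -> cx_obj P' n)
    (psi' : forall n, cx_obj P' n -> cx_obj P n) :
  is_grading GA -> is_bimod_complex P -> is_bimod_complex P' ->
  graded_resolution GA GP -> graded_resolution GA GP' ->
  (forall n, is_bhom (psi n)) -> (forall n, graded_map (GP n) (GP' n) (psi n)) ->
  is_chain_map_lifting_id P' P psi' -> (forall n, cancel (psi n) (psi' n)) ->
  let psi0 n := deg0 (GP' n) (GP n) (psi' n) in
  [/\ is_chain_map_lifting_id P' P psi0, forall n, graded_map (GP' n) (GP n) (psi0 n)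
    & forall n, cancel (psi n) (psi0 n)].
Proof.
move=> hGA [hd he] [hd' he'] [gP gd ge] [gP' gd' ge'] hpsi gpsi.
move=> [hpsi' d_psi' eps_psi'] psi'K psi0; rewrite {}/psi0.
have hG n : is_grading (GP n) by case: (gP n).
have hG' n : is_grading (GP' n) by case: (gP' n).
have psi'_0 n : psi' n 0 = 0 by apply: bhom0.
split; first split.
- by move=> n; exact: (deg0_bhom hGA (gP' n) (gP n) (hpsi' n)).
- move=> n x.
  rewrite (deg0_compl (hG' _) (hG _) (hG _) (psi'_0 _) (bhomD (hd n)) (gd n)).
  rewrite (eq_deg0 _ _ (d_psi' n)).
  by rewrite (deg0_compr (hG' _) (hG' _) (hG _) (psi'_0 _) (bhomD (hd' n)) (gd' n)).
- move=> x; rewrite (deg0_compl (hG' _) (hG _) hGA (psi'_0 _) (bhomD he) ge).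
  by rewrite (eq_deg0 _ _ eps_psi') (deg0_graded_map (hG' _) hGA (bhomD he') ge').
- by move=> n; exact: (deg0_graded (hG' n) (hG n) (psi'_0 n)).
- move=> n x.
  rewrite (deg0_compr (hG _) (hG' _) (hG _) (psi'_0 _) (bhomD (hpsi n)) (gpsi n)).
  rewrite (eq_deg0 _ _ (psi'K n)).
  by rewrite (deg0_graded_map (hG _) (hG _) (bhomD (bhom_id _))).
Qed.

Theorem lemma9p1 (k : fieldType) (A : algType k) (P P' : aug_complex A)
  (psi : forall n, cx_obj P n -> cx_obj P' n) :
  is_bimod_resolution P -> is_bimod_resolution P' ->
  is_chain_map_lifting_id P P' psi ->
  (forall n (x y : cx_obj P n), psi n x = psi n y -> x = y) ->
  (* P'_n / Im psi_n is a projective A-bimodule: it is realized by a cokernel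
     Q of psi_n (a surjective bimodule map pi with kernel Im psi_n) *)
  (forall n, exists (Q : bimod A) (pi : cx_obj P' n -> Q),
      [/\ is_bhom pi, (forall q, exists x, pi x = q),
          (forall x, pi x = 0 <-> exists y, psi n y = x)
        & projective_bimod Q]) ->
  (exists psi' : forall n, cx_obj P' n -> cx_obj P n,
      is_chain_map_lifting_id P' P psi' /\ forall n x, psi' n (psi n x) = x)
  /\
  (forall (GA : int -> A -> Prop)
          (GP : forall n, int -> cx_obj P n -> Prop)
          (GP' : forall n, int -> cx_obj P' n -> Prop),
      graded_algebra GA ->
      graded_resolution GA GP -> graded_resolution GA GP' ->
      (forall n, graded_map (GP n) (GP' n) (psi n)) ->
      exists psi' : forall n, cx_obj P' n -> cx_obj P n,
        [/\ is_chain_map_lifting_id P' P psi',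
            forall n, graded_map (GP' n) (GP n) (psi' n)
          & forall n x, psi' n (psi n x) = x]).
Proof.
move=> hP hP' hpsi psi_inj coker_proj.
have coker n : exists (Q : bimod A) (pi : cx_obj P' n -> Q),
    bimod_coker (psi n) pi /\ projective_bimod Q.
  by have [Q [pi [? ? ? ?]]] := coker_proj n; exists Q, pi.
have [psi' [hpsi' psi'K]] := chain_retraction_exists hP hP' hpsi psi_inj coker.
split=> [|GA GP GP' [hGA _ _ _] gP gP' gpsi]; first by exists psi'.
have [psi_bhom _ _] := hpsi.
exists (fun n => deg0 (GP' n) (GP n) (psi' n)).
exact: deg0_chain_retraction hGA (bimod_resolution_complex hP)
  (bimod_resolution_complex hP') gP gP' psi_bhom gpsi hpsi' psi'K.
Qed.
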